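(* Let $r\le s$, $M$ the space of complex $r\times s$ matrices, and $\lambda$ a pre-partition of length at most $r$ with associated orbit $O_\lambda\subset M_\infty$. If $\lambda$ is a partition, then $O_\lambda$ is a cylinder of $M_\infty$. More generally, if $r-k$ is the number of infinite terms of $\lambda$, then $O_\lambda$ is a cylinder of $(D_k)_\infty$, where $D_k\subset M$ is the variety of matrices of rank at most $k$.
   Context: For a variety $X$, a constructible subset is a finite union of locally closed subsets, and a cylinder in the arc space $X_\infty$ is a set $\psi_n^{-1}(C)$ with $C\subset X_n$ constructible, where $\psi_n:X_\infty\to X_n$ is the truncation to the $n$-th jet scheme. The $\mathbb{C}$-points of $M_\infty$ are $r\times s$ matrices over $\mathbb{C}[[t]]$, acted on by $G_\infty$ for $G=GL_r\times GL_s$ via $(g,h)\cdot A=gAh^{-1}$. A pre-partition of length at most $r$ is $\lambda_1\ge\dots\ge\lambda_r\ge0$ in $\mathbb N\cup\{\infty\}$ ($\infty>n$); a partition if all terms finite. $\delta_\lambda$ is the $r\times s$ matrix with first $s-r$ columns zero and last $r$ columns $\mathrm{diag}(t^{\lambda_1},\dots,t^{\lambda_r})$ ($t^\infty=0$), and $O_\lambda=G_\infty\cdot\delta_\lambda$. $D_k$ is defined by the $(k+1)\times(k+1)$ minors. *)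

From HB Require Import structures.
From mathcomp Require Import all_boot all_order all_algebra.
From mathcomp Require Import reals.
From mathcomp Require Import complex.
From mathcomp Require mpoly.

Set Implicit Arguments.
Unset Strict Implicit.
Unset Printing Implicit Defensive.

Import Order.TTheory GRing.Theory Num.Theory.
Local Open Scope ring_scope.

Section Defs.
Variable R : realType.
Local Notation C := (complex R).

Definition zero_locus (N : nat) (P : mpoly.mpoly N C -> Prop) : ('I_N -> C) -> Prop :=
  fun x => forall p, P p -> mpoly.meval x p = 0.

Definition locally_closed (N : nat) (S : ('I_N -> C) -> Prop) : Prop :=
  exists P Q : mpoly.mpoly N C -> Prop,
    forall x, S x <-> (zero_locus P x /\ ~ zero_locus Q x).

Definition constructible (N : nat) (S : ('I_N -> C) -> Prop) : Prop :=
  exists (m : nat) (L : 'I_m -> ('I_N -> C) -> Prop),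
    (forall i, locally_closed (L i)) /\ (forall x, S x <-> exists i, L i x).

(* an arc of M: an r x s matrix over C[[t]]; A i j l = coefficient of t^l *)
Definition arcM (r s : nat) := 'I_r -> 'I_s -> nat -> C.

(* an n-jet of M: an r x s matrix over C[t]/(t^(n+1)) *)
Definition jetM (r s n : nat) := 'I_r -> 'I_s -> 'I_n.+1 -> C.

Definition psi (r s n : nat) (A : arcM r s) : jetM r s n :=
  fun i j m => A i j (nat_of_ord m).
Arguments psi {r s} n A.

(* the jet space M_n is the affine space C^(r s (n+1)); its coordinates *)
Definition jet_coords (r s n : nat) (x : 'I_#|{: 'I_r * 'I_s * 'I_n.+1}| -> C)
  : jetM r s n := fun i j m => x (enum_rank (i, j, m)).

Definition constructible_jet (r s n : nat) (S : jetM r s n -> Prop) : Prop :=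
  constructible (fun x => S (jet_coords x)).

Definition jet_polymx (r s n : nat) (J : jetM r s n) : 'M[{poly C}]_(r, s) :=
  \matrix_(i, j) \poly_(m < n.+1) J i j (inord m).

(* J in (D_k)_n : all (k+1)x(k+1) minors vanish in C[t]/(t^(n+1)) *)
Definition jet_in_D (r s n k : nat) (J : jetM r s n) : Prop :=
  forall (f : 'I_k.+1 -> 'I_r) (g : 'I_k.+1 -> 'I_s),
    injective f -> injective g ->
    ('X^(n.+1) %| \det (\matrix_(a, b) jet_polymx J (f a) (g b)))%R.

(* A in (D_k)_oo = projective limit of the (D_k)_n *)
Definition arc_in_D (r s k : nat) (A : arcM r s) : Prop :=
  forall n, jet_in_D k (psi n A).

Definition cylinder_M (r s : nat) (X : arcM r s -> Prop) : Prop :=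
  exists (n : nat) (S : jetM r s n -> Prop),
    constructible_jet S /\ forall A, X A <-> S (psi n A).

Definition cylinder_D (r s k : nat) (X : arcM r s -> Prop) : Prop :=
  exists (n : nat) (S : jetM r s n -> Prop),
    constructible_jet S /\ (forall J, S J -> jet_in_D k J) /\
    forall A, X A <-> (arc_in_D k A /\ S (psi n A)).

Definition psmx_mul (m n p : nat) (A : 'I_m -> 'I_n -> nat -> C)
  (B : 'I_n -> 'I_p -> nat -> C) : 'I_m -> 'I_p -> nat -> C :=
  fun i j l => \sum_(k < n) \sum_(a < l.+1) A i k a * B k j (l - a)%N.

Definition psmx_id (n : nat) : 'I_n -> 'I_n -> nat -> C :=
  fun i j l => if (i == j) && (l == 0%N) then 1 else 0.
Arguments psmx_id : clear implicits.

(* None stands for infinity *)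
Definition le_ext (a b : option nat) : bool :=
  match a, b with
  | _, None => true
  | None, Some _ => false
  | Some x, Some y => (x <= y)%N
  end.

(* lambda_1 >= ... >= lambda_r >= 0 in N u {oo} (indices shifted to 0..r-1) *)
Definition prepartition (r : nat) (lam : 'I_r -> option nat) : Prop :=
  forall i j : 'I_r, (i <= j)%N -> le_ext (lam j) (lam i).

Definition is_partition (r : nat) (lam : 'I_r -> option nat) : Prop :=
  forall i, lam i <> None.

(* t^m, with t^oo = 0 *)
Definition tpow (a : option nat) : nat -> C :=
  fun l => match a with Some m => if l == m then 1 else 0 | None => 0 end.

(* first s-r columns zero, last r columns diag(t^lam_1, ..., t^lam_r) *)
Definition delta (r s : nat) (lam : 'I_r -> option nat) : arcM r s :=
  fun i j l => if nat_of_ord j == (s - r + i)%N then tpow (lam i) l else 0.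
Arguments delta {r} s lam.

(* O_lambda = G_oo . delta_lambda, (g,h).A = g A h^{-1} *)
Definition O_lam (r s : nat) (lam : 'I_r -> option nat) : arcM r s -> Prop :=
  fun A => exists (g g' : 'I_r -> 'I_r -> nat -> C) (h h' : 'I_s -> 'I_s -> nat -> C),
    psmx_mul g g' = psmx_id r /\ psmx_mul g' g = psmx_id r /\
    psmx_mul h h' = psmx_id s /\ psmx_mul h' h = psmx_id s /\
    A = psmx_mul (psmx_mul g (delta s lam)) h'.

End Defs.
Arguments O_lam R {r} s lam.
Arguments cylinder_D {R r s} k X.

From HB Require Import structures.
From mathcomp Require Import all_boot all_order all_algebra perm.
From mathcomp Require Import reals complex closed_field.
From mathcomp Require mpoly.
From Stdlib Require Import FunctionalExtensionality.

(* Let n bound the finite terms of lam and let k be their number.  Then O_lam is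
   the set of arcs of (D_k)_oo whose n-jet lies in psi_n(O_lam).  Indeed, if
   A = g delta h mod t^(n+1) with g, h invertible, then g^-1 A h^-1 = delta mod
   t^(n+1); column operations make its rows with finite lam_i equal to those of
   delta, the (k+1)-minors through these rows force the remaining rows to live
   in the columns of delta, and row operations then reduce it to delta.  The set
   psi_n(O_lam) is the projection of the algebraic set of tuples
   (J, g, g', h, h') of n-jets with g g' = 1, h h' = 1 and J = g delta h, hence
   is constructible by Chevalley's theorem (quantifier elimination over C). *)

Set Implicit Arguments.
Unset Strict Implicit.
Unset Printing Implicit Defensive.

Import GRing.Theory.
Local Open Scope ring_scope.

Module Chevalley.
Import mpoly.

Section Chevalley.
Variables (R : realType) (N : nat).
Local Notation C := (complex R).
Local Notation term := (GRing.term C).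

(* A variable of index [>= N] is sent to [0], its value in [env_of x] below;
   inverses do not occur in the terms we translate ([GRing.rterm]). *)
Fixpoint mpoly_of_term (t : term) : {mpoly C[N]} :=
  match t with
  | GRing.Var i => if insub i is Some j then 'X_j else 0
  | GRing.Const c => c%:MP
  | GRing.NatConst n => n%:R
  | GRing.Add a b => mpoly_of_term a + mpoly_of_term b
  | GRing.Opp a => - mpoly_of_term a
  | GRing.NatMul a n => mpoly_of_term a *+ n
  | GRing.Mul a b => mpoly_of_term a * mpoly_of_term b
  | GRing.Inv _ => 0
  | GRing.Exp a n => mpoly_of_term a ^+ n
  end.

Definition env_of (x : 'I_N -> C) : seq C := [seq x i | i <- enum 'I_N].

Lemma size_env_of x : size (env_of x) = N.
Proof. by rewrite size_map size_enum_ord. Qed.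

Lemma nth_env_of x i : nth 0 (env_of x) i = if insub i is Some j then x j else 0.
Proof.
case: insubP => [j _ <- | ge]; last by rewrite nth_default // size_env_of leqNgt.
by rewrite (nth_map j) ?size_enum_ord ?ltn_ord // nth_ord_enum.
Qed.

Lemma eval_mpoly_of_term x t :
  GRing.rterm t -> GRing.eval (env_of x) t = meval x (mpoly_of_term t).
Proof.
elim: t => //=.
- move=> i _; rewrite nth_env_of; case: insubP => [j _ _|_]; last by rewrite rmorph0.
  by rewrite mevalXU.
- by move=> c _; rewrite mevalC.
- by move=> n _; rewrite rmorph_nat.
- by move=> a IHa b IHb /andP[ra rb]; rewrite rmorphD IHa ?IHb.
- by move=> a IHa ra; rewrite rmorphN IHa.
- by move=> a IHa n ra; rewrite rmorphMn IHa.
- by move=> a IHa b IHb /andP[ra rb]; rewrite rmorphM IHa ?IHb.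
- by move=> a IHa n ra; rewrite rmorphXn IHa.
Qed.

Lemma constructible_ext (S1 S2 : ('I_N -> C) -> Prop) :
  (forall x, S1 x <-> S2 x) -> constructible S1 -> constructible S2.
Proof. by move=> e [m [L [HL HS]]]; exists m, L; split => // x; rewrite -e. Qed.

Definition sat_clause (bc : seq term * seq term) (x : 'I_N -> C) :=
  all (fun t => GRing.eval (env_of x) t == 0) bc.1 &&
  all (fun t => GRing.eval (env_of x) t != 0) bc.2.

Lemma zero_locus_terms (ts : seq term) x : all (@GRing.rterm _) ts ->
  zero_locus (fun p => has (fun t => mpoly_of_term t == p) ts) x <->
  all (fun t => GRing.eval (env_of x) t == 0) ts.
Proof.
rewrite /zero_locus; elim: ts => [|t ts IH] /=; first by split.
case/andP => rt rts; split.
  move=> h; rewrite eval_mpoly_of_term // h ?eqxx //=; apply/(IH rts).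
  by move=> p hp; apply: h; rewrite hp orbT.
case/andP => /eqP t0 /(IH rts) h p /orP[/eqP <-|]; last exact: h.
by rewrite -eval_mpoly_of_term.
Qed.

Lemma locally_closed_clause bc : GRing.dnf_rterm bc -> locally_closed (sat_clause bc).
Proof.
case: bc => ps qs /andP[/= rps rqs].
exists (fun p => has (fun t => mpoly_of_term t == p) ps).
exists (fun p => p = \prod_(t <- qs) mpoly_of_term t) => x.
have nz_prod : all (fun t => GRing.eval (env_of x) t != 0) qs =
               (meval x (\prod_(t <- qs) mpoly_of_term t) != 0).
  rewrite rmorph_prod prodf_seq_neq0.
  by elim: qs rqs => //= q qs IH /andP[rq rqs]; rewrite IH // eval_mpoly_of_term.
have zl := zero_locus_terms x rps.
rewrite /sat_clause /= nz_prod; split.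
  case/andP => /zl hp hq; split => // hz.
  by move/negP: hq; apply; apply/eqP; exact: hz _ erefl.
by case=> /zl -> h; apply/negP => /eqP hz; apply: h => p ->.
Qed.

Lemma constructible_dnf bcs : all (@GRing.dnf_rterm _) bcs ->
  constructible (fun x => has (sat_clause^~ x) bcs).
Proof.
move=> rb; exists (size bcs), (fun i => sat_clause (nth ([::], [::]) bcs i)).
split=> [i|x]; first by apply: locally_closed_clause; apply: (all_nthP _ rb).
split; first by case/(has_nthP ([::], [::])) => i ib cl; exists (Ordinal ib).
by case=> i cl; apply/(has_nthP ([::], [::])); exists i.
Qed.

Lemma qf_eval_dnf_to_form (e : seq C) bcs :
  GRing.qf_eval e (GRing.dnf_to_form bcs) =
  has (fun bc => all (fun t => GRing.eval e t == 0) bc.1 &&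
                 all (fun t => GRing.eval e t != 0) bc.2) bcs.
Proof.
elim: bcs => [|[ps qs] bcs IH] //=; rewrite IH; congr ((_ && _) || _).
  by elim: ps => //= p ps ->.
by elim: qs => //= q qs ->.
Qed.

Definition zeros_form (ts : seq term) : GRing.formula C :=
  foldr (fun t f => GRing.And (GRing.Equal t (GRing.Const 0)) f) GRing.True ts.

Definition exists_vars (i0 M : nat) (f : GRing.formula C) : GRing.formula C :=
  foldr (fun i f => GRing.Exists i f) f (iota i0 M).

Lemma holds_zeros_form (e : seq C) ts :
  GRing.holds e (zeros_form ts) <-> all (fun t => GRing.eval e t == 0) ts.
Proof.
elim: ts => [|t ts IH] //=; split; first by case=> /eqP -> /IH ->.
by case/andP=> /eqP -> /IH.
Qed.

Lemma holds_exists_vars M f (e : seq C) :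
  GRing.holds e (exists_vars (size e) M f) <->
  exists ys, size ys = M /\ GRing.holds (e ++ ys) f.
Proof.
elim: M e => [|M IH] e /=.
  split; first by move=> h; exists [::]; rewrite cats0.
  by case=> ys [/size0nil -> ]; rewrite cats0.
have set_last y : set_nth 0 e (size e) y = rcons e y by elim: e {IH} => //= a e ->.
split.
  case=> y; rewrite set_last -(size_rcons e y) IH => -[ys [<- h]].
  by exists (y :: ys); rewrite -cat_rcons.
case=> [[|y ys] [//= [sz] h]]; exists y; rewrite set_last -(size_rcons e y) IH.
by exists ys; rewrite cat_rcons.
Qed.

Lemma rformula_zeros_form ts : all (@GRing.rterm _) ts -> GRing.rformula (zeros_form ts).
Proof. by elim: ts => //= t ts IH /andP[-> /IH ->]. Qed.

Lemma rformula_exists_vars i0 M f : GRing.rformula f -> GRing.rformula (exists_vars i0 M f).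
Proof. by rewrite /exists_vars; elim: M i0 => //= M IH i0 /IH. Qed.

(* Chevalley's theorem, by quantifier elimination in the algebraically closed field [C]. *)
Theorem constructible_exists_zeros M (ts : seq term) : all (@GRing.rterm _) ts ->
  constructible (fun x => exists ys : seq C, size ys = M /\
     all (fun t => GRing.eval (env_of x ++ ys) t == 0) ts).
Proof.
move=> rts; pose f := exists_vars N M (zeros_form ts).
have rf : GRing.rformula f by apply: rformula_exists_vars; apply: rformula_zeros_form.
pose qf := GRing.quantifier_elim (@ClosedFieldQE.ex_elim C) f.
have wf := GRing.quantifier_elim_wf (@ClosedFieldQE.wf_ex_elim C) rf.
have qfP := GRing.quantifier_elim_rformP (@ClosedFieldQE.wf_ex_elim C)
   (ClosedFieldQE.holds_ex_elim (@complex_acf_axiom R)) _ rf.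
apply: (@constructible_ext (fun x => has (sat_clause^~ x) (GRing.qf_to_dnf qf false))).
  move=> x; rewrite (_ : has _ _ = GRing.qf_eval (env_of x) qf); last first.
    by rewrite -(GRing.qf_to_dnfP _ wf) qf_eval_dnf_to_form.
  rewrite -(rwP (qfP _)) /f -(size_env_of x) holds_exists_vars.
  by split=> -[ys [sz /holds_zeros_form h]]; exists ys.
by apply/constructible_dnf/GRing.qf_to_dnf_rterm; case/andP: wf.
Qed.

End Chevalley.
End Chevalley.
Import Chevalley.

Lemma expand_det_col0 (T : comPzRingType) K (M : 'M[T]_K.+1) :
  (forall t, M (lift ord0 t) ord0 = 0) ->
  \det M = M ord0 ord0 * \det (row' ord0 (col' ord0 M)).
Proof.
move=> M0; rewrite (expand_det_col M ord0) big_ord_recl big1 => [|t _].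
  by rewrite addr0 /cofactor addn0 expr0 mul1r.
by rewrite M0 mul0r.
Qed.

Section PolyCongruence.
Variable F : fieldType.
Implicit Types (d p q : {poly F}).

Lemma dvdXnP L p : reflect (forall i, (i < L)%N -> p`_i = 0) ('X^L %| p).
Proof.
apply: (iffP idP) => [|p_low].
  by rewrite dvdp_eq => /eqP -> i iL; rewrite coefMXn iL.
apply/dvdpP; exists (\poly_(i < size p) p`_(i + L)); apply/polyP => i.
rewrite coefMXn coef_poly; case: ltnP => iL; first exact: p_low.
case: ltnP => hs; first by rewrite subnK.
by rewrite nth_default // (leq_trans hs (leq_subr _ _)).
Qed.

Lemma dvdXn_coef L p q : 'X^L %| p - q -> forall i, (i < L)%N -> p`_i = q`_i.
Proof. by move/dvdXnP => h i /h /eqP; rewrite coefB subr_eq0 => /eqP. Qed.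

Lemma coef_dvdXn_mulXn l M p : 'X^((l + M).+1) %| p * 'X^M -> p`_l = 0.
Proof. by move/dvdXnP/(_ (l + M) (ltnSn _)); rewrite coefMXn ltnNge leq_addl /= addnK. Qed.

Definition eqmodp d p q := d %| p - q.

Lemma eqmodpxx d p : eqmodp d p p.
Proof. by rewrite /eqmodp subrr dvdp0. Qed.

Lemma eqmodp_sym d p q : eqmodp d p q -> eqmodp d q p.
Proof. by rewrite /eqmodp -opprB dvdpNr. Qed.

Lemma eqmodp_trans d p q u : eqmodp d p q -> eqmodp d q u -> eqmodp d p u.
Proof. by move=> pq qu; rewrite /eqmodp -(subrKA q) dvdp_add. Qed.

Lemma eqmodpD d p p' q q' :
  eqmodp d p p' -> eqmodp d q q' -> eqmodp d (p + q) (p' + q').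
Proof. by move=> hp hq; rewrite /eqmodp opprD addrACA dvdp_add. Qed.

Lemma eqmodpM d p p' q q' :
  eqmodp d p p' -> eqmodp d q q' -> eqmodp d (p * q) (p' * q').
Proof.
move=> hp hq; rewrite /eqmodp; have -> : p * q - p' * q' = (p - p') * q + p' * (q - q').
  by rewrite mulrBl mulrBr addrA subrK.
by apply: dvdp_add; [apply: dvdp_mulr | apply: dvdp_mull].
Qed.

Lemma eqmodp_sum d (I : Type) (s : seq I) (P : pred I) (G H : I -> {poly F}) :
  (forall i, P i -> eqmodp d (G i) (H i)) ->
  eqmodp d (\sum_(i <- s | P i) G i) (\sum_(i <- s | P i) H i).
Proof. by move=> GH; apply: (big_ind2 (eqmodp d)) => //; [apply: eqmodpxx | apply: eqmodpD]. Qed.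

Lemma eqmodp_prod d (I : Type) (s : seq I) (P : pred I) (G H : I -> {poly F}) :
  (forall i, P i -> eqmodp d (G i) (H i)) ->
  eqmodp d (\prod_(i <- s | P i) G i) (\prod_(i <- s | P i) H i).
Proof. by move=> GH; apply: (big_ind2 (eqmodp d)) => //; [apply: eqmodpxx | apply: eqmodpM]. Qed.

Definition eqmodmx d m n (A B : 'M[{poly F}]_(m, n)) := forall i j, eqmodp d (A i j) (B i j).

Lemma eqmodmx_sym d m n (A B : 'M_(m, n)) : eqmodmx d A B -> eqmodmx d B A.
Proof. by move=> AB i j; apply: eqmodp_sym. Qed.

Lemma eqmodmx_trans d m n (A B D : 'M_(m, n)) :
  eqmodmx d A B -> eqmodmx d B D -> eqmodmx d A D.
Proof. by move=> AB BD i j; apply: eqmodp_trans (AB i j) (BD i j). Qed.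

Lemma eqmodmx_mul d m n l (A A' : 'M_(m, n)) (B B' : 'M_(n, l)) :
  eqmodmx d A A' -> eqmodmx d B B' -> eqmodmx d (A *m B) (A' *m B').
Proof. by move=> hA hB i j; rewrite !mxE; apply: eqmodp_sum => k _; apply: eqmodpM. Qed.

Lemma eqmodp_det d K (A B : 'M_K) : eqmodmx d A B -> eqmodp d (\det A) (\det B).
Proof.
move=> AB; apply: eqmodp_sum => s _; apply: eqmodpM; first exact: eqmodpxx.
by apply: eqmodp_prod => i _; apply: AB.
Qed.

Definition minors_dvd d K m n (A : 'M[{poly F}]_(m, n)) :=
  forall (f : 'I_K -> 'I_m) (g : 'I_K -> 'I_n), injective f -> injective g ->
  d %| \det (mxsub f g A).

Lemma det_mxsub_mul K l m n (X : 'M[{poly F}]_(l, m)) (A : 'M_(m, n))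
    (f : 'I_K -> 'I_l) (g : 'I_K -> 'I_n) :
  \det (mxsub f g (X *m A)) =
  \sum_(phi : {ffun 'I_K -> 'I_m}) (\prod_a X (f a) (phi a)) * \det (mxsub phi g A).
Proof.
rewrite /determinant.
under eq_bigr => sg _.
  rewrite (eq_bigr (fun a => \sum_k X (f a) k * A k (g (sg a)))); last first.
    by move=> a _; rewrite !mxE.
  rewrite bigA_distr_bigA mulr_sumr.
over.
rewrite exchange_big /=; apply: eq_bigr => phi _.
rewrite mulr_sumr; apply: eq_bigr => sg _.
by rewrite big_split /= mulrCA; congr (_ * (_ * _)); apply: eq_bigr => a _; rewrite mxE.
Qed.

Lemma minors_dvd_mull d K l m n (X : 'M_(l, m)) (A : 'M_(m, n)) :
  minors_dvd d K A -> minors_dvd d K (X *m A).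
Proof.
move=> dA f g f_inj g_inj; rewrite det_mxsub_mul.
apply: (big_ind (fun q => d %| q)) => [|p q|phi _]; [exact: dvdp0 | exact: dvdp_add |].
apply: dvdp_mull; have [/injectiveP phi_inj|/injectivePn [a1 [a2 ne e]]] := boolP (injectiveb phi).
  exact: dA.
by rewrite (determinant_alternate ne) ?dvdp0 // => b; rewrite !mxE e.
Qed.

Lemma minors_dvd_tr d K m n (A : 'M_(m, n)) : minors_dvd d K A -> minors_dvd d K A^T.
Proof. by move=> dA f g f_inj g_inj; rewrite -trmx_mxsub det_tr; apply: dA. Qed.

Lemma minors_dvd_mulr d K m n l (A : 'M_(m, n)) (Y : 'M_(n, l)) :
  minors_dvd d K A -> minors_dvd d K (A *m Y).
Proof.
move=> dA; rewrite -[A *m Y]trmxK trmx_mul.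
by apply/minors_dvd_tr/minors_dvd_mull/minors_dvd_tr.
Qed.

Lemma minors_dvd_eqmodmx d K m n (A B : 'M_(m, n)) :
  eqmodmx d A B -> minors_dvd d K A -> minors_dvd d K B.
Proof.
move=> AB dA f g f_inj g_inj.
have /eqmodp_det : eqmodmx d (mxsub f g B) (mxsub f g A).
  by move=> a b; rewrite !mxE; apply: eqmodp_sym.
by rewrite /eqmodp => /dvdp_add /(_ (dA f g f_inj g_inj)); rewrite subrK.
Qed.

Lemma minors_dvd_few_rows d K m n (A : 'M_(m, n)) (rows : {set 'I_m}) :
  (#|rows| < K)%N -> (forall i j, i \notin rows -> A i j = 0) -> minors_dvd d K A.
Proof.
move=> few A0 f g f_inj g_inj.
have [a fa] : exists a, f a \notin rows.
  apply/existsP; rewrite -negb_forall; apply: contraTN few => /forallP f_rows.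
  rewrite -leqNgt -[K]card_ord -cardsT -(card_imset _ f_inj) subset_leq_card //.
  by apply/subsetP => _ /imsetP [a _ ->].
by rewrite (expand_det_row _ a) big1 ?dvdp0 // => b _; rewrite !mxE A0 // mul0r.
Qed.

End PolyCongruence.

Section ArcMatrices.
Variable R : realType.
Local Notation C := (complex R).
Local Notation psmx m n := ('I_m -> 'I_n -> nat -> C).
Local Notation "A ** B" := (psmx_mul A B) (at level 40, left associativity).
Local Notation id n := (@psmx_id R n).

Lemma psmx_ext m n (A B : psmx m n) : (forall i j l, A i j l = B i j l) -> A = B.
Proof.
move=> AB; do 2 apply: functional_extensionality => ?.
by apply: functional_extensionality => l; apply: AB.
Qed.

Definition trunc_polymx L m n (A : psmx m n) : 'M[{poly C}]_(m, n) :=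
  \matrix_(i, j) \poly_(l < L) A i j l.

Lemma coef_trunc_polymx L m n (A : psmx m n) i j l :
  (trunc_polymx L A i j)`_l = if (l < L)%N then A i j l else 0.
Proof. by rewrite mxE coef_poly. Qed.

Lemma jet_polymx_psi N m n (A : psmx m n) : jet_polymx (psi (n := N) A) = trunc_polymx N.+1 A.
Proof.
by apply/matrixP => i j; rewrite !mxE; apply: eq_poly => l lN; rewrite /psi inordK.
Qed.

Lemma coef_trunc_polymx_mul L m n p (A : psmx m n) (B : psmx n p) i j l : (l < L)%N ->
  ((trunc_polymx L A *m trunc_polymx L B) i j)`_l = (A ** B) i j l.
Proof.
move=> lL; rewrite mxE coef_sum; apply: eq_bigr => k _.
rewrite coefM; apply: eq_bigr => a _; rewrite !coef_trunc_polymx.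
have aL : (a < L)%N by apply: leq_ltn_trans lL; rewrite -ltnS.
by rewrite aL (leq_ltn_trans (leq_subr _ _) lL).
Qed.

Lemma trunc_polymx_mul L m n p (A : psmx m n) (B : psmx n p) :
  eqmodmx 'X^L (trunc_polymx L (A ** B)) (trunc_polymx L A *m trunc_polymx L B).
Proof.
move=> i j; apply/dvdXnP => l lL.
by rewrite coefB coef_trunc_polymx lL coef_trunc_polymx_mul // subrr.
Qed.

Lemma psmx_mulA m n p q (A : psmx m n) (B : psmx n p) (D : psmx p q) :
  A ** (B ** D) = A ** B ** D.
Proof.
apply: psmx_ext => i j l; pose T := trunc_polymx l.+1.
rewrite -!(coef_trunc_polymx_mul (L := l.+1)) //.
have eqA_BD : eqmodmx 'X^(l.+1) (T _ _ A *m T _ _ (B ** D)) (T _ _ A *m T _ _ B *m T _ _ D).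
  rewrite -mulmxA; apply: eqmodmx_mul => [i' j'|]; first exact: eqmodpxx.
  exact: trunc_polymx_mul.
have eqAB_D : eqmodmx 'X^(l.+1) (T _ _ (A ** B) *m T _ _ D) (T _ _ A *m T _ _ B *m T _ _ D).
  apply: eqmodmx_mul => [|i' j']; first exact: trunc_polymx_mul.
  exact: eqmodpxx.
by rewrite (dvdXn_coef (eqA_BD i j)) // (dvdXn_coef (eqAB_D i j)).
Qed.

Lemma trunc_polymx_id L n : (0 < L)%N -> trunc_polymx L (id n) = 1%:M.
Proof.
move=> L0; apply/matrixP => i j; rewrite !mxE; apply/polyP => l.
rewrite coef_poly /psmx_id; case: (i == j); rewrite /= ?mulr1n ?mulr0n ?coef1 ?coef0.
  by case: l => [|l] /=; rewrite ?L0 //; case: ifP.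
by case: ifP.
Qed.

Lemma psmx_mul1 m n (A : psmx m n) : id m ** A = A.
Proof.
apply: psmx_ext => i j l.
rewrite -(coef_trunc_polymx_mul (L := l.+1)) // trunc_polymx_id //.
by rewrite mul1mx coef_trunc_polymx ltnSn.
Qed.

Lemma psmx_mulr1 m n (A : psmx m n) : A ** id n = A.
Proof.
apply: psmx_ext => i j l.
rewrite -(coef_trunc_polymx_mul (L := l.+1)) // trunc_polymx_id //.
by rewrite mulmx1 coef_trunc_polymx ltnSn.
Qed.

Definition agree N m n (A B : psmx m n) := forall i j l, (l <= N)%N -> A i j l = B i j l.

Lemma agreexx N m n (A : psmx m n) : agree N A A.
Proof. by []. Qed.

Lemma agree_sym N m n (A B : psmx m n) : agree N A B -> agree N B A.
Proof. by move=> AB i j l lN; rewrite AB. Qed.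

Lemma agree_trans N m n (A B D : psmx m n) : agree N A B -> agree N B D -> agree N A D.
Proof. by move=> AB BD i j l lN; rewrite AB ?BD. Qed.

Lemma agree_mul_row N m n p (A A' : psmx m n) (B B' : psmx n p) i :
  (forall k l, (l <= N)%N -> A i k l = A' i k l) -> agree N B B' ->
  forall j l, (l <= N)%N -> (A ** B) i j l = (A' ** B') i j l.
Proof.
move=> AA' BB' j l lN; apply: eq_bigr => k _; apply: eq_bigr => a _.
have aN : (a <= N)%N by rewrite (leq_trans _ lN) // -ltnS.
by rewrite AA' // BB' // (leq_trans (leq_subr _ _) lN).
Qed.

Lemma agree_mul N m n p (A A' : psmx m n) (B B' : psmx n p) :
  agree N A A' -> agree N B B' -> agree N (A ** B) (A' ** B').
Proof. by move=> AA' BB' i; apply: agree_mul_row => // k l; apply: AA'. Qed.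

Lemma agree_psiE N m n (A B : psmx m n) : agree N A B <-> psi (n := N) A = psi (n := N) B.
Proof.
split=> [AB|AB i j l lN].
  by do 3 apply: functional_extensionality => ?; rewrite /psi AB // -ltnS.
by have /(congr1 (fun J => J i j (@Ordinal N.+1 l lN))) := AB.
Qed.

Definition coefmx m n (A : psmx m n) l : 'M[C]_(m, n) := \matrix_(i, j) A i j l.

Lemma coefmx_mul m n p (A : psmx m n) (B : psmx n p) l :
  coefmx (A ** B) l = \sum_(a < l.+1) coefmx A a *m coefmx B (l - a).
Proof.
apply/matrixP => i j; rewrite !mxE summxE /psmx_mul exchange_big.
by apply: eq_bigr => a _; rewrite mxE; apply: eq_bigr => k _; rewrite !mxE.
Qed.

Lemma coefmx_id n l : coefmx (id n) l = if l == 0%N then 1%:M else 0.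
Proof.
apply/matrixP => i j; rewrite !mxE /psmx_id.
by case: l => [|l]; rewrite !mxE ?andbT ?andbF //; case: (i == j).
Qed.

Lemma coefmx_inj m n (A B : psmx m n) : (forall l, coefmx A l = coefmx B l) -> A = B.
Proof. by move=> AB; apply: psmx_ext => i j l; have /matrixP/(_ i j) := AB l; rewrite !mxE. Qed.

Section RightInverse.
Variables (n : nat) (X : psmx n n).
Let X0inv := invmx (coefmx X 0).

Fixpoint rinv_coefs (l : nat) : nat -> 'M[C]_n :=
  match l with
  | 0 => fun _ => X0inv
  | l'.+1 => fun k => if k == l'.+1 then
       - (X0inv *m \sum_(a < l'.+1) coefmx X a.+1 *m rinv_coefs l' (l' - a))
     else rinv_coefs l' k
  end.

Let rinv_coef l := rinv_coefs l l.

Lemma rinv_coefs_stable l k : (k <= l)%N -> rinv_coefs l k = rinv_coef k.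
Proof.
elim: l k => [|l IH] k; first by rewrite leqn0 => /eqP ->.
rewrite leq_eqVlt => /orP[/eqP -> //|]; rewrite ltnS => kl /=.
by rewrite ifN_eq ?IH //; apply: contraTneq kl => ->; rewrite ltnn.
Qed.

Lemma rinv_coefS l :
  rinv_coef l.+1 = - (X0inv *m \sum_(a < l.+1) coefmx X a.+1 *m rinv_coef (l - a)).
Proof.
rewrite /rinv_coef /= eqxx; congr (- (_ *m _)); apply: eq_bigr => a _.
by rewrite rinv_coefs_stable // leq_subr.
Qed.

Definition psmx_rinv : psmx n n := fun i j l => rinv_coef l i j.

Lemma coefmx_rinv l : coefmx psmx_rinv l = rinv_coef l.
Proof. by apply/matrixP => i j; rewrite mxE. Qed.

Lemma coefmx_rinv0 : coefmx psmx_rinv 0 = invmx (coefmx X 0).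
Proof. exact: coefmx_rinv. Qed.

Lemma psmx_mulrV : coefmx X 0 \in unitmx -> X ** psmx_rinv = id n.
Proof.
move=> X0_unit; apply: coefmx_inj => l.
rewrite coefmx_mul coefmx_id big_ord_recl subn0 coefmx_rinv.
case: l => [|l]; first by rewrite big_ord0 addr0 /rinv_coef /= mulmxV.
rewrite rinv_coefS mulmxN mulmxA mulmxV // mul1mx.
rewrite [X in _ + X](eq_bigr (fun a : 'I_l.+1 => coefmx X a.+1 *m rinv_coef (l - a))).
  by rewrite addNr.
by move=> a _; rewrite coefmx_rinv subSS.
Qed.

End RightInverse.

Definition psmx_unit n (X : psmx n n) := exists Y, X ** Y = id n /\ Y ** X = id n.

Lemma psmx_unitP n (X : psmx n n) : psmx_unit X <-> coefmx X 0 \in unitmx.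
Proof.
split=> [[Y [XY _]]|X0_unit].
  have /(congr1 (fun A => coefmx A 0)) := XY.
  by rewrite coefmx_mul coefmx_id big_ord1 => /mulmx1_unit [].
have XY := psmx_mulrV X0_unit; exists (psmx_rinv X); split => //.
have [Z YZ] : exists Z, psmx_rinv X ** Z = id n.
  by exists (psmx_rinv (psmx_rinv X)); apply: psmx_mulrV; rewrite coefmx_rinv0 unitmx_inv.
have XZ : X = Z by rewrite -[LHS]psmx_mulr1 -YZ psmx_mulA XY psmx_mul1.
by rewrite {2}XZ.
Qed.

Lemma psmx_unit_of_agree N n (X Y : psmx n n) : agree N (X ** Y) (id n) -> psmx_unit X.
Proof.
move=> XY; apply/psmx_unitP; have : coefmx (X ** Y) 0 = coefmx (id n) 0.
  by apply/matrixP => i j; rewrite !mxE XY.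
by rewrite coefmx_mul coefmx_id big_ord1 => /mulmx1_unit [].
Qed.

Lemma psmx_unit_mul n (X Y : psmx n n) : psmx_unit X -> psmx_unit Y -> psmx_unit (X ** Y).
Proof.
move=> [X' [XX' X'X]] [Y' [YY' Y'Y]]; exists (Y' ** X'); split.
  by rewrite psmx_mulA -(psmx_mulA X) YY' psmx_mulr1.
by rewrite psmx_mulA -(psmx_mulA Y') X'X psmx_mulr1.
Qed.

Lemma arc_in_DE k m n (A : psmx m n) :
  arc_in_D k A <-> forall N, minors_dvd 'X^(N.+1) k.+1 (trunc_polymx N.+1 A).
Proof. by split=> DA N; have := DA N; rewrite /jet_in_D jet_polymx_psi. Qed.

Lemma arc_in_D_mul k m m' n n' (X : psmx m' m) (A : psmx m n) (Y : psmx n n') :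
  arc_in_D k A -> arc_in_D k (X ** A ** Y).
Proof.
rewrite !arc_in_DE => DA N; pose T := trunc_polymx N.+1.
apply: (@minors_dvd_eqmodmx _ _ _ _ _ (T _ _ X *m T _ _ A *m T _ _ Y)).
  apply: eqmodmx_sym; apply: eqmodmx_trans (trunc_polymx_mul _ _ _) _.
  by apply: eqmodmx_mul (trunc_polymx_mul _ _ _) _ => i j; apply: eqmodpxx.
by apply/minors_dvd_mulr/minors_dvd_mull.
Qed.

Lemma arc_in_D_full k m n (A : psmx m n) : (m <= k)%N -> arc_in_D k A.
Proof.
move=> mk N f g f_inj _; have := leq_card f f_inj.
by rewrite !card_ord ltnNge (leq_trans mk).
Qed.

End ArcMatrices.

Definition extend0 (T : Type) K (x0 : T) (e : 'I_K -> T) (x : 'I_K.+1) : T :=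
  if unlift ord0 x is Some t then e t else x0.

Lemma extend0_ord0 (T : Type) K (x0 : T) (e : 'I_K -> T) : extend0 x0 e ord0 = x0.
Proof. by rewrite /extend0 unlift_none. Qed.

Lemma extend0_lift (T : Type) K (x0 : T) (e : 'I_K -> T) t : extend0 x0 e (lift ord0 t) = e t.
Proof. by rewrite /extend0 liftK. Qed.

Lemma extend0_inj (T : eqType) K (x0 : T) (e : 'I_K -> T) :
  injective e -> (forall t, e t != x0) -> injective (extend0 x0 e).
Proof.
move=> e_inj e_x0 x y; rewrite /extend0.
case: (unliftP ord0 x) => [tx ->|->]; case: (unliftP ord0 y) => [ty ->|->] //.
- by move/e_inj ->.
- by move/eqP; rewrite (negPf (e_x0 tx)).
- by move/esym/eqP; rewrite (negPf (e_x0 ty)).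
Qed.

Section Delta.
Variables (R : realType) (r s : nat) (lam : 'I_r -> option nat).
Hypothesis r_le_s : (r <= s)%N.
Local Notation C := (complex R).
Local Notation psmx m n := ('I_m -> 'I_n -> nat -> C).
Local Notation "A ** B" := (psmx_mul A B) (at level 40, left associativity).
Local Notation id n := (@psmx_id R n).
Local Notation delta := (@delta R r s lam).
Local Notation O_lam := (O_lam R s lam).

Lemma O_lamP A :
  O_lam A <-> exists g h, psmx_unit g /\ psmx_unit h /\ A = g ** delta ** h.
Proof.
split=> [[g [g' [h [h' [gg' [g'g [hh' [h'h ->]]]]]]]]|[g [h [[g' [gg' g'g]] [[h' [hh' h'h]] ->]]]]].
  by exists g, h'; do !split => //; [exists g' | exists h].
by exists g, g', h', h.
Qed.

Lemma O_lam_mul g h A : psmx_unit g -> psmx_unit h -> O_lam A -> O_lam (g ** A ** h).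
Proof.
move=> gU hU /O_lamP [g' [h' [g'U [h'U ->]]]]; apply/O_lamP.
exists (g ** g'), (h' ** h); split; first exact: psmx_unit_mul.
by split; [exact: psmx_unit_mul | rewrite !psmx_mulA].
Qed.

Lemma col_of_lt (i : 'I_r) : (s - r + i < s)%N.
Proof. by rewrite -{2}(subnK r_le_s) ltn_add2l ltn_ord. Qed.

Definition col_of (i : 'I_r) : 'I_s := Ordinal (col_of_lt i).

Lemma col_of_inj : injective col_of.
Proof. by move=> i j /(congr1 val) /addnI /val_inj. Qed.

Lemma deltaE i j l : delta i j l = if j == col_of i then tpow R (lam i) l else 0.
Proof. by rewrite /delta -val_eqE. Qed.

(* Multiplication of a power series by [t^a], with [t^oo = 0]. *)
Definition tshift (a : option nat) (F : nat -> C) (l : nat) : C :=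
  if a is Some mu then (if (mu <= l)%N then F (l - mu)%N else 0) else 0.

Lemma mul_delta_row q (Y : psmx s q) i j l :
  (delta ** Y) i j l = tshift (lam i) (Y (col_of i) j) l.
Proof.
rewrite /psmx_mul (bigD1 (col_of i)) //= [X in _ + X]big1 ?addr0 => [|k /negPf nk]; last first.
  by apply: big1 => a _; rewrite deltaE nk mul0r.
under eq_bigr do rewrite deltaE eqxx.
case: (lam i) => [mu|] /=; last by rewrite big1 // => a _; rewrite mul0r.
case: leqP => [mu_l|l_mu].
  rewrite (bigD1 (Ordinal (leq_ltn_trans mu_l (ltnSn l)))) //= eqxx mul1r big1 ?addr0 //.
  by move=> a /eqP ne; rewrite /tpow; case: eqP => [e|]; [case: ne; apply: val_inj | rewrite mul0r].
rewrite big1 // => a _; rewrite /tpow; case: eqP => [e|]; last by rewrite mul0r.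
by move: (ltn_ord a); rewrite e ltnS leqNgt l_mu.
Qed.

Lemma mul_delta_col q (X : psmx q r) i k l :
  (X ** delta) i (col_of k) l = tshift (lam k) (X i k) l.
Proof.
rewrite /psmx_mul (bigD1 k) //= [X in _ + X]big1 ?addr0 => [|k' nk]; last first.
  by apply: big1 => a _; rewrite deltaE (inj_eq col_of_inj) eq_sym (negPf nk) mulr0.
under eq_bigr do rewrite deltaE eqxx.
case: (lam k) => [mu|] /=; last by rewrite big1 // => a _; rewrite mulr0.
case: leqP => [mu_l|l_mu].
  have lmu : (l - mu < l.+1)%N by rewrite ltnS leq_subr.
  rewrite (bigD1 (Ordinal lmu)) //= subKn // eqxx mulr1 big1 ?addr0 // => a /eqP ne.
  rewrite /tpow; case: eqP => [e|]; last by rewrite mulr0.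
  by case: ne; apply: val_inj; rewrite /= -e subKn // -ltnS.
rewrite big1 // => a _; rewrite /tpow; case: eqP => [e|]; last by rewrite mulr0.
by move: (leq_subr a l); rewrite e leqNgt l_mu.
Qed.

Lemma mul_delta_col0 q (X : psmx q r) i b l :
  (forall k, b != col_of k) -> (X ** delta) i b l = 0.
Proof.
by move=> nb; apply: big1 => k _; apply: big1 => a _; rewrite deltaE (negPf (nb k)) mulr0.
Qed.

Definition finite_rows := [set i | lam i != None].
Local Notation Fin := finite_rows.

Lemma delta_infinite_row i j l : i \notin Fin -> delta i j l = 0.
Proof. by rewrite inE negbK => /eqP lam_i; rewrite deltaE lam_i; case: ifP. Qed.

Lemma arc_in_D_delta : arc_in_D #|Fin| delta.
Proof.
apply/arc_in_DE => N; apply: (@minors_dvd_few_rows _ _ _ _ _ _ Fin) => // i j.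
rewrite inE negbK => /eqP lam_i; rewrite mxE; apply/polyP => l.
by rewrite coef_poly coef0 deltaE lam_i; case: ifP => //; case: ifP.
Qed.

Lemma arc_in_D_O_lam A : O_lam A -> arc_in_D #|Fin| A.
Proof. by case/O_lamP => g [h [_ [_ ->]]]; apply/arc_in_D_mul/arc_in_D_delta. Qed.

Definition rows_delta (A : psmx r s) :=
  forall i, i \in Fin -> forall j l, A i j l = delta i j l.

Lemma poly_tpow N mu : (mu <= N)%N -> \poly_(l < N.+1) tpow R (Some mu) l = 'X^mu.
Proof.
move=> muN; apply/polyP => l; rewrite coef_poly coefXn /tpow.
by case: eqP => [->|_]; [rewrite ltnS muN | case: ifP].
Qed.

Definition infinite_rows_in_delta_cols (A : psmx r s) :=
  forall a b, a \notin Fin -> (forall i, i \in Fin -> b != col_of i) -> forall l, A a b l = 0.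

(* The minor on the rows [Fin + a] and columns [col_of Fin + b] is
   [A a b * t^(sum of the finite lam_i)]; it vanishes in every jet space. *)
Lemma rows_delta_rank A :
  arc_in_D #|Fin| A -> rows_delta A -> infinite_rows_in_delta_cols A.
Proof.
move=> DA A_Fin a b aFin bFin l.
pose e := @enum_val _ (pred_of_set Fin); have eFin t : e t \in Fin := enum_valP t.
pose mu t := odflt 0%N (lam (e t)); pose M := (\sum_t mu t)%N.
have mu_le t : (mu t <= l + M)%N by rewrite (leq_trans _ (leq_addl _ _)) // /M (bigD1 t) ?leq_addr.
pose f := extend0 a e; pose g := extend0 b (col_of \o e).
have f_inj : injective f.
  by apply: extend0_inj => [x y /enum_val_inj|t] //; apply: contraNneq aFin => <-.
have g_inj : injective g.
  by apply: extend0_inj => [x y /col_of_inj/enum_val_inj|t] //; rewrite eq_sym bFin.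
have := (proj1 (arc_in_DE _ _) DA (l + M)%N f g f_inj g_inj).
set Mx := mxsub f g _; suff -> : \det Mx = trunc_polymx (l + M).+1 A a b * 'X^M.
  by move/coef_dvdXn_mulXn; rewrite coef_trunc_polymx ltnS leq_addr.
have Mx_lift t t' : Mx (lift ord0 t) (lift ord0 t') = (t == t')%:R * 'X^(mu t).
  rewrite !mxE /f /g !extend0_lift; case: eqP => [<-|/eqP ne].
    rewrite mul1r -(poly_tpow (mu_le t)).
    apply: eq_poly => q _; rewrite A_Fin // deltaE eqxx /mu.
    by move: (eFin t); rewrite inE; case: (lam (e t)).
  apply/polyP => q; rewrite mul0r coef_poly coef0 A_Fin // deltaE.
  by rewrite (inj_eq col_of_inj) (inj_eq enum_val_inj) eq_sym (negPf ne); case: ifP.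
rewrite expand_det_col0 => [|t]; last first.
  apply/polyP => q; rewrite !mxE /f /g extend0_lift extend0_ord0 coef_poly coef0 A_Fin //.
  by rewrite deltaE (negPf (bFin _ (eFin t))); case: ifP.
have -> : row' ord0 (col' ord0 Mx) = diag_mx (\row_t 'X^(mu t)).
  by apply/matrixP => t t'; rewrite [LHS]mxE [LHS]mxE Mx_lift !mxE mulr_natl.
rewrite det_diag (eq_bigr (fun t => 'X^(mu t))) => [|t _]; last by rewrite mxE.
by rewrite prodrXr !mxE /f /g !extend0_ord0.
Qed.

Variable n : nat.
Hypothesis lam_le_n : forall i mu, lam i = Some mu -> (mu <= n)%N.

Lemma col_reduce A : agree n A delta ->
  exists A' H, psmx_unit H /\ A = A' ** H /\ agree n A' delta /\ rows_delta A'.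
Proof.
move=> A_delta.
(* Row [i] of [A] is divisible by [t^(lam i)]; [H] puts the quotient in row [col_of i]. *)
pose H : psmx s s := fun b j l =>
  if [pick i in Fin | col_of i == b] is Some i then A i j (l + odflt 0 (lam i))%N
  else id s b j l.
have H_col i mu : lam i = Some mu -> forall j l, H (col_of i) j l = A i j (l + mu)%N.
  move=> lam_i j l; rewrite /H; case: pickP => [i' /andP[_ /eqP /col_of_inj ->]|/(_ i)].
    by rewrite lam_i.
  by rewrite inE lam_i eqxx.
have [Hi [HHi HiH]] : psmx_unit H.
  apply/psmx_unitP; suff -> : coefmx H 0 = 1%:M by exact: unitmx1.
  apply/matrixP => b j; rewrite !mxE /H; case: pickP => [i /andP[iFin /eqP <-]|_].
    move: iFin; rewrite inE; case lam_i: (lam i) => [mu|] // _ /=.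
    rewrite add0n A_delta ?(lam_le_n lam_i) // deltaE lam_i /tpow eqxx eq_sym.
    by case: (col_of i == j).
  by rewrite /psmx_id andbT; case: (b == j).
have deltaH i : i \in Fin -> forall j l, (delta ** H) i j l = A i j l.
  rewrite inE; case lam_i: (lam i) => [mu|] // _ j l.
  rewrite mul_delta_row lam_i /=; case: leqP => [mu_l|l_mu].
    by rewrite (H_col _ _ lam_i) subnK.
  rewrite A_delta ?(leq_trans (ltnW l_mu) (lam_le_n lam_i)) // deltaE lam_i /tpow.
  by case: (j == col_of i) => //; case: eqP => // el; rewrite el ltnn in l_mu.
have AHi_Fin : rows_delta (A ** Hi).
  move=> i iFin j l; rewrite (agree_mul_row (N := l) (A' := delta ** H) (B' := Hi)) //.
    by rewrite -psmx_mulA HHi psmx_mulr1.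
  by move=> k l' _; rewrite deltaH.
exists (A ** Hi), H; split; first by exists Hi.
split; first by rewrite -psmx_mulA HiH psmx_mulr1.
split=> // i j l ln; have [iFin|iFin] := boolP (i \in Fin); first exact: AHi_Fin.
rewrite delta_infinite_row // (agree_mul_row (N := n) (A' := delta) (B' := Hi)) //.
  by rewrite mul_delta_row; move: iFin; rewrite inE negbK => /eqP ->.
by move=> k l' l'n; rewrite A_delta.
Qed.

Lemma row_reduce A : agree n A delta -> rows_delta A -> infinite_rows_in_delta_cols A ->
  exists U, psmx_unit U /\ A = U ** delta.
Proof.
move=> A_delta A_Fin A_zero.
(* Entry [(a, col_of k)] of [A], for [a] infinite and [k] finite, is divisible by [t^(lam k)]. *)
pose U : psmx r r := fun a k l => id r a k l +
  (if (a \notin Fin) && (k \in Fin) then A a (col_of k) (l + odflt 0 (lam k))%N else 0).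
exists U; split.
  apply/psmx_unitP; suff -> : coefmx U 0 = coefmx (id r) 0 by rewrite coefmx_id unitmx1.
  apply/matrixP => a k; rewrite !mxE /U.
  case: (boolP ((a \notin Fin) && (k \in Fin))) => [/andP[aFin]|_]; last by rewrite addr0.
  rewrite inE; case lam_k: (lam k) => [mu|] // _ /=.
  by rewrite add0n A_delta ?(lam_le_n lam_k) // delta_infinite_row // addr0.
apply: psmx_ext => a b l.
have [k /eqP ->|b_col] := pickP (fun k => b == col_of k); last first.
  rewrite mul_delta_col0 => [|k]; last by rewrite b_col.
  have [aFin|aFin] := boolP (a \in Fin); last by apply: A_zero => // i _; rewrite b_col.
  by rewrite A_Fin // deltaE b_col.
rewrite mul_delta_col; case lam_k: (lam k) => [mu|] /=; last first.
  have kFin i : i \in Fin -> col_of k != col_of i.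
    by rewrite inE (inj_eq col_of_inj); apply: contraNneq => <-; rewrite lam_k.
  have [aFin|aFin] := boolP (a \in Fin); last exact: A_zero.
  by rewrite A_Fin // deltaE (negPf (kFin _ aFin)).
have kFin : k \in Fin by rewrite inE lam_k.
rewrite /U kFin andbT; have [aFin|aFin] := boolP (a \in Fin).
  rewrite A_Fin // deltaE (inj_eq col_of_inj) addr0 /psmx_id.
  have [<-|_] := eqVneq k a; last by case: leqP.
  rewrite lam_k /tpow /= subn_eq0; case: leqP => [mu_l|l_mu].
    by rewrite eqn_leq mu_l andbT.
  by rewrite (ltn_eqF l_mu).
rewrite /psmx_id (_ : (a == k) = false) ?add0r; last by apply: contraNF aFin => /eqP ->.
rewrite lam_k /=; case: leqP => [mu_l|l_mu]; first by rewrite subnK.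
by rewrite A_delta ?delta_infinite_row // (leq_trans (ltnW l_mu) (lam_le_n lam_k)).
Qed.

Lemma O_lam_of_agree_delta A : arc_in_D #|Fin| A -> agree n A delta -> O_lam A.
Proof.
move=> DA A_delta; have [A' [H [HU [A_A'H [A'_delta A'_Fin]]]]] := col_reduce A_delta.
have DA' : arc_in_D #|Fin| A'.
  have [Hi [HHi _]] := HU.
  have -> : A' = id r ** A ** Hi by rewrite psmx_mul1 A_A'H -psmx_mulA HHi psmx_mulr1.
  exact: arc_in_D_mul.
have [U [UU A'_U]] := row_reduce A'_delta A'_Fin (rows_delta_rank DA' A'_Fin).
by apply/O_lamP; exists U, H; rewrite A_A'H A'_U.
Qed.

Lemma O_lam_of_agree A g h : arc_in_D #|Fin| A -> psmx_unit g -> psmx_unit h ->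
  agree n A (g ** delta ** h) -> O_lam A.
Proof.
move=> DA gU hU A_gdh; have [g' [gg' g'g]] := gU; have [h' [hh' h'h]] := hU.
have -> : A = g ** (g' ** A ** h') ** h.
  by rewrite !psmx_mulA gg' psmx_mul1 -psmx_mulA h'h psmx_mulr1.
apply: O_lam_mul gU hU _; apply: O_lam_of_agree_delta; first exact: arc_in_D_mul.
have := agree_mul (agree_mul (agreexx g') A_gdh) (agreexx h').
by rewrite !psmx_mulA g'g psmx_mul1 -[delta ** h ** h']psmx_mulA hh' psmx_mulr1.
Qed.

End Delta.

Section JetOrbit.
Variables (R : realType) (r s : nat) (lam : 'I_r -> option nat) (n : nat).
Hypothesis r_le_s : (r <= s)%N.
Local Notation C := (complex R).
Local Notation psmx m n := ('I_m -> 'I_n -> nat -> C).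
Local Notation "A ** B" := (psmx_mul A B) (at level 40, left associativity).
Local Notation id n := (@psmx_id R n).
Local Notation delta := (@delta R r s lam).
Local Notation Fin := (finite_rows lam).

(* [psi_n(O_lam)]: the units [g], [h] only matter modulo [t^(n+1)], where
   invertibility is witnessed by [g'], [h']. *)
Definition jet_orbit (J : jetM R r s n) : Prop :=
  exists (g g' : psmx r r) (h h' : psmx s s),
    [/\ agree n (g ** g') (id r), agree n (h ** h') (id s) & J = psi (g ** delta ** h)].

Lemma jet_orbit_psi A : O_lam R s lam A -> jet_orbit (psi A).
Proof.
by case=> g [g' [h [h' [gg' [_ [_ [h'h ->]]]]]]]; exists g, g', h', h; rewrite gg' h'h.
Qed.

Lemma jet_orbit_in_D J : jet_orbit J -> jet_in_D #|Fin| J.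
Proof. by case=> g [_ [h [_ [_ _ ->]]]]; apply/arc_in_D_mul/(arc_in_D_delta _ r_le_s). Qed.

Lemma O_lam_of_jet_orbit A : (forall i mu, lam i = Some mu -> (mu <= n)%N) ->
  arc_in_D #|Fin| A -> jet_orbit (psi A) -> O_lam R s lam A.
Proof.
move=> lam_le_n DA [g [g' [h [h' [/psmx_unit_of_agree gU /psmx_unit_of_agree hU]]]]].
by move/agree_psiE; apply: O_lam_of_agree DA gU hU.
Qed.

Lemma O_lamE A : (forall i mu, lam i = Some mu -> (mu <= n)%N) ->
  O_lam R s lam A <-> arc_in_D #|Fin| A /\ jet_orbit (psi A).
Proof.
move=> lam_le_n; split=> [OA|[DA]]; last exact: O_lam_of_jet_orbit.
by split; [apply: arc_in_D_O_lam | apply: jet_orbit_psi].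
Qed.

End JetOrbit.

Section JetOrbitConstructible.
Variables (R : realType) (r s : nat) (lam : 'I_r -> option nat) (n : nat).
Local Notation C := (complex R).
Local Notation psmx m n := ('I_m -> 'I_n -> nat -> C).
Local Notation "A ** B" := (psmx_mul A B) (at level 40, left associativity).
Local Notation id n := (@psmx_id R n).
Local Notation delta := (@delta R r s lam).
Local Notation term := (GRing.term C).
Local Notation I3 a b := ('I_a * 'I_b * 'I_n.+1)%type.
Local Notation termmx a b := ('I_a -> 'I_b -> 'I_n.+1 -> term).
Local Notation jet_orbit := (@jet_orbit R r s lam n).

Definition term_sum (I : Type) (xs : seq I) (F : I -> term) : term :=
  \big[GRing.Add/GRing.Const 0]_(x <- xs) F x.

Lemma eval_term_sum e (I : Type) (xs : seq I) (F : I -> term) :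
  GRing.eval e (term_sum xs F) = \sum_(x <- xs) GRing.eval e (F x).
Proof. by apply: (big_rec2 (fun t v => GRing.eval e t = v)) => // x t v _ /= ->. Qed.

Lemma rterm_term_sum (I : Type) (xs : seq I) (F : I -> term) :
  (forall x, GRing.rterm (F x)) -> GRing.rterm (term_sum xs F).
Proof. by move=> rF; apply: (big_rec (fun t => GRing.rterm t)) => // x t _ /= ->; rewrite rF. Qed.

Definition term_mul a b c (X : termmx a b) (Y : termmx b c) : termmx a c :=
  fun i j l => term_sum (enum 'I_b) (fun k => term_sum (enum 'I_l.+1) (fun t : 'I_l.+1 =>
     GRing.Mul (X i k (inord t)) (Y k j (inord (l - t))))).

Definition term_const a b (A : psmx a b) : termmx a b := fun i j l => GRing.Const (A i j l).

Definition rtermmx a b (X : termmx a b) := forall i j l, GRing.rterm (X i j l).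

Definition eval_termmx (e : seq C) a b (X : termmx a b) (A : psmx a b) :=
  forall i j (l : 'I_n.+1), GRing.eval e (X i j l) = A i j l.

Lemma rterm_term_mul a b c (X : termmx a b) (Y : termmx b c) :
  rtermmx X -> rtermmx Y -> rtermmx (term_mul X Y).
Proof.
by move=> rX rY i j l; do 2 apply: rterm_term_sum => ?; rewrite /= rX rY.
Qed.

Lemma eval_term_mul e a b c (X : termmx a b) (Y : termmx b c) A B :
  eval_termmx e X A -> eval_termmx e Y B -> eval_termmx e (term_mul X Y) (A ** B).
Proof.
move=> XA YB i j l; rewrite eval_term_sum /psmx_mul big_enum /=.
apply: eq_bigr => k _; rewrite eval_term_sum big_enum /=; apply: eq_bigr => t _ /=.
have tn : (t <= n)%N by rewrite -ltnS (leq_trans (ltn_ord t)).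
by rewrite XA YB !inordK // ltnS (leq_trans (leq_subr _ _)) // -ltnS.
Qed.

Definition eq_terms a b (X Y : termmx a b) : seq term :=
  [seq GRing.Add (X q.1.1 q.1.2 q.2) (GRing.Opp (Y q.1.1 q.1.2 q.2)) | q <- enum {: I3 a b}].

Lemma rterm_eq_terms a b (X Y : termmx a b) :
  rtermmx X -> rtermmx Y -> all (@GRing.rterm _) (eq_terms X Y).
Proof. by move=> rX rY; rewrite /eq_terms all_map; apply/allP => q _ /=; rewrite rX rY. Qed.

Lemma eq_termsP e a b (X Y : termmx a b) A B :
  eval_termmx e X A -> eval_termmx e Y B ->
  all (fun t => GRing.eval e t == 0) (eq_terms X Y) <-> agree n A B.
Proof.
move=> XA YB; rewrite all_map; split=> [/allP AB i j l ln|AB].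
  have := AB (i, j, @Ordinal n.+1 l ln) (mem_enum _ _); rewrite /= XA YB subr_eq0.
  by move/eqP.
by apply/allP => [[[i j] l]] _ /=; rewrite XA YB AB ?subrr // -ltnS.
Qed.

Local Notation jet_index := (I3 r s).
Definition unknowns := ((I3 r r + I3 r r) + (I3 s s + I3 s s))%type.

(* Variables [0 .. #|jet_index| - 1] are the coordinates of the jet;
   the unknown coefficients of [g], [g'], [h], [h'] come after them. *)
Definition unknown_term (v : unknowns) : term := GRing.Var C (#|{: jet_index}| + enum_rank v).
Definition jet_term : termmx r s := fun i j l => GRing.Var C (enum_rank ((i, j, l) : jet_index)).
Definition unknown_mx a (tag : I3 a a -> unknowns) : termmx a a :=
  fun i j l => unknown_term (tag (i, j, l)).
Definition g_tag (q : I3 r r) : unknowns := inl (inl q).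
Definition g'_tag (q : I3 r r) : unknowns := inl (inr q).
Definition h_tag (q : I3 s s) : unknowns := inr (inl q).
Definition h'_tag (q : I3 s s) : unknowns := inr (inr q).

Definition orbit_eqs : seq term :=
  eq_terms (term_mul (unknown_mx g_tag) (unknown_mx g'_tag)) (term_const (id r)) ++
  eq_terms (term_mul (unknown_mx h_tag) (unknown_mx h'_tag)) (term_const (id s)) ++
  eq_terms jet_term (term_mul (term_mul (unknown_mx g_tag) (term_const delta)) (unknown_mx h_tag)).

Lemma rterm_orbit_eqs : all (@GRing.rterm _) orbit_eqs.
Proof.
by rewrite !all_cat !rterm_eq_terms //; do ?apply: rterm_term_mul.
Qed.

Definition decode a (ys : seq C) (tag : I3 a a -> unknowns) : psmx a a :=
  fun i j l => if (l < n.+1)%N then nth 0 ys (enum_rank (tag (i, j, inord l))) else 0.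

Definition jet_arc (J : jetM R r s n) : psmx r s :=
  fun i j l => if (l < n.+1)%N then J i j (inord l) else 0.

Lemma psi_jet_arc J : psi (jet_arc J) = J.
Proof.
by do 3 apply: functional_extensionality => ?; rewrite /psi /jet_arc ltn_ord inord_val.
Qed.

Section Evaluation.
Variables (x : 'I_#|{: jet_index}| -> C) (ys : seq C).
Local Notation e := (env_of x ++ ys).

Lemma eval_term_const a b (A : psmx a b) : eval_termmx e (term_const A) A.
Proof. by []. Qed.

Lemma eval_jet_term : eval_termmx e jet_term (jet_arc (jet_coords x)).
Proof.
move=> i j l; rewrite /= nth_cat size_env_of ltn_ord nth_env_of valK.
by rewrite /jet_arc ltn_ord inord_val.
Qed.

Lemma eval_unknown_mx a (tag : I3 a a -> unknowns) :
  eval_termmx e (unknown_mx tag) (decode ys tag).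
Proof.
move=> i j l; rewrite /= nth_cat size_env_of ltnNge leq_addr /= addKn.
by rewrite /decode ltn_ord inord_val.
Qed.

End Evaluation.

Lemma all_orbit_eqsP (x : 'I_#|{: jet_index}| -> C) ys :
  all (fun t => GRing.eval (env_of x ++ ys) t == 0) orbit_eqs <->
  [/\ agree n (decode ys g_tag ** decode ys g'_tag) (id r),
      agree n (decode ys h_tag ** decode ys h'_tag) (id s) &
      jet_coords x = psi (decode ys g_tag ** delta ** decode ys h_tag)].
Proof.
have eval_unknown := eval_unknown_mx x ys; have eval_const := eval_term_const x ys.
have e1 := eq_termsP (eval_term_mul (eval_unknown _ g_tag) (eval_unknown _ g'_tag))
  (eval_const _ _ (id r)).
have e2 := eq_termsP (eval_term_mul (eval_unknown _ h_tag) (eval_unknown _ h'_tag))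
  (eval_const _ _ (id s)).
have e3 := eq_termsP (eval_jet_term x ys) (eval_term_mul
  (eval_term_mul (eval_unknown _ g_tag) (eval_const _ _ delta)) (eval_unknown _ h_tag)).
rewrite agree_psiE psi_jet_arc in e3; rewrite /orbit_eqs !all_cat.
by split=> [/and3P[/e1 ? /e2 ? /e3 ?] | [/e1 ? /e2 ? /e3 ?]]; [split | apply/and3P].
Qed.

Definition unknown_value (g g' : psmx r r) (h h' : psmx s s) (v : unknowns) : C :=
  match v with
  | inl (inl (i, j, l)) => g i j l | inl (inr (i, j, l)) => g' i j l
  | inr (inl (i, j, l)) => h i j l | inr (inr (i, j, l)) => h' i j l
  end.

Definition encode g g' h h' : seq C := map (unknown_value g g' h h') (enum {: unknowns}).

Lemma decode_encode g g' h h' (ys := encode g g' h h') :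
  [/\ agree n (decode ys g_tag) g, agree n (decode ys g'_tag) g',
      agree n (decode ys h_tag) h & agree n (decode ys h'_tag) h'].
Proof.
have nth_ys v : nth 0 ys (enum_rank v) = unknown_value g g' h h' v.
  by rewrite (nth_map v) ?nth_enum_rank // -cardT ltn_ord.
suff decodeE a (tag : I3 a a -> unknowns) (A : psmx a a) :
    (forall q, unknown_value g g' h h' (tag q) = A q.1.1 q.1.2 q.2) ->
    agree n (decode ys tag) A by split; apply: decodeE => -[[]].
by move=> tagA i j l ln; rewrite /decode ltnS ln nth_ys tagA /= inordK.
Qed.

Lemma jet_orbitE x : jet_orbit (jet_coords x) <->
  exists ys, size ys = #|{: unknowns}| /\
    all (fun t => GRing.eval (env_of x ++ ys) t == 0) orbit_eqs.
Proof.
split=> [[g [g' [h [h' [gg' hh' J_gdh]]]]]|[ys [_ /all_orbit_eqsP [gg' hh' J_gdh]]]].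
  have [dg dg' dh dh'] := decode_encode g g' h h'.
  exists (encode g g' h h'); split; first by rewrite size_map -cardE.
  apply/all_orbit_eqsP; split.
  - exact: agree_trans (agree_mul dg dg') gg'.
  - exact: agree_trans (agree_mul dh dh') hh'.
  by rewrite J_gdh -agree_psiE; apply: agree_sym (agree_mul (agree_mul dg (agreexx _)) dh).
by exists (decode ys g_tag), (decode ys g'_tag), (decode ys h_tag), (decode ys h'_tag).
Qed.

Lemma constructible_jet_orbit : constructible_jet jet_orbit.
Proof.
apply: (constructible_ext (S1 := fun x => exists ys, size ys = #|{: unknowns}| /\
  all (fun t => GRing.eval (env_of x ++ ys) t == 0) orbit_eqs)).
  by move=> x; rewrite jet_orbitE.
exact/constructible_exists_zeros/rterm_orbit_eqs.
Qed.

End JetOrbitConstructible.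

Lemma card_finite_rows r k (lam : 'I_r -> option nat) :
  (k <= r)%N -> #|[pred i | lam i == None]| = (r - k)%N -> #|finite_rows lam| = k.
Proof.
move=> k_le_r card_inf; have := cardC [pred i | lam i == None].
rewrite card_inf card_ord => /(congr1 (subn^~ (r - k)%N)).
rewrite addKn subKn // => <-; by apply: eq_card => i; rewrite !inE.
Qed.

Lemma card_finite_rows_partition r (lam : 'I_r -> option nat) :
  is_partition lam -> #|finite_rows lam| = r.
Proof.
by move=> lam_fin; rewrite -[RHS]card_ord; apply: eq_card => i; rewrite !inE; apply/eqP.
Qed.

Theorem proposition3p4 (R : realType) (r s : nat) (lam : 'I_r -> option nat) :
  (r <= s)%N -> prepartition lam ->
  (is_partition lam -> cylinder_M (O_lam R s lam)) /\
  (forall k : nat, (k <= r)%N ->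
     #|[pred i | lam i == None]| = (r - k)%N ->
     cylinder_D k (O_lam R s lam)).
Proof.
move=> r_le_s _; pose n := (\max_(i < r) odflt 0 (lam i))%N.
have lam_le_n i mu : lam i = Some mu -> (mu <= n)%N.
  by move=> lam_i; have := @leq_bigmax _ (fun i => odflt 0%N (lam i)) i; rewrite lam_i.
have O_lamE (A : arcM R r s) := O_lamE r_le_s A lam_le_n.
split=> [lam_fin|k k_le_r /(card_finite_rows k_le_r) card_fin].
  have card_fin := card_finite_rows_partition lam_fin.
  exists n, (jet_orbit lam (n := n)); split=> [|A]; first exact: constructible_jet_orbit.
  by rewrite O_lamE card_fin; split=> [[]//|]; split=> //; apply: arc_in_D_full.
exists n, (jet_orbit lam (n := n)); split; first exact: constructible_jet_orbit.
split=> [J|A]; first by rewrite -card_fin; apply: jet_orbit_in_D.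
by rewrite O_lamE card_fin.
Qed.
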